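(* Let $\mathbb T$ be a finitary monad on $\mathbf{Set}$, let $B$ be a finite $\mathbb T$-algebra, and let $m$ be a $\mathbb T$-automaton with finite state set $X$ and output algebra $B$. Then for every $x\in X$ the formal power series $\llbracket x\rrbracket_m:A^*\to B$ is rational, i.e. the set $\{\partial_w(\llbracket x\rrbracket_m)\mid w\in A^*\}$ is finite.
   Context: Fix a finite set $A$ of actions. $LX=B\times X^A$; an $L$-coalgebra is a set $X$ with $o:X\to B$ and $\partial_a:X\to X$; $\partial_\epsilon(x)=x$, $\partial_{aw}(x)=\partial_w(\partial_a(x))$. The set $B^{A^*}$ is the final $L$-coalgebra with $o(\sigma)=\sigma(\epsilon)$, $\partial_a(\sigma)=\lambda w.\,\sigma(aw)$; for an $L$-coalgebra $Y$, $\llbracket-\rrbracket_Y:Y\to B^{A^*}$ is the unique coalgebra morphism, $\llbracket y\rrbracket_Y(w)=o(\partial_w(y))$. A $\mathbb T$-automaton consists of a finite set $X$, a $\mathbb T$-algebra $a^m:TB\to B$ (finitely generated), and maps $o^m:X\to B$, $t^m:A\times X\to TX$. Equip $B\times(TX)^A$ with the componentwise $\mathbb T$-algebra structure ($a^m$ on $B$, the free structure $\mu_X$ on $TX$, pointwise on the power); let $m^\sharp:TX\to B\times(TX)^A$ be the unique $\mathbb T$-algebra morphism with $m^\sharp(\eta_X(x))=(o^m(x),\lambda a.\,t^m(a,x))$. This makes $TX$ an $L$-coalgebra, and the trace semantics is $\llbracket x\rrbracket_m=\llbracket\eta_X(x)\rrbracket_{TX}$. *)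

From mathcomp Require Import all_boot.
Set Implicit Arguments. Unset Strict Implicit. Unset Printing Implicit Defensive.

Record monad := Monad {
  T :> Type -> Type;
  fmap : forall (X Y : Type), (X -> Y) -> T X -> T Y;
  eta : forall X : Type, X -> T X;
  mu : forall X : Type, T (T X) -> T X;
  fmap_id : forall (X : Type) (t : T X), fmap (fun x => x) t = t;
  fmap_comp : forall (X Y Z : Type) (f : X -> Y) (g : Y -> Z) (t : T X),
      fmap (fun x => g (f x)) t = fmap g (fmap f t);
  eta_nat : forall (X Y : Type) (f : X -> Y) (x : X), fmap f (eta x) = eta (f x);
  mu_nat : forall (X Y : Type) (f : X -> Y) (t : T (T X)),
      fmap f (mu t) = mu (fmap (fmap f) t);
  mu_eta : forall (X : Type) (t : T X), mu (eta t) = t;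
  mu_fmap_eta : forall (X : Type) (t : T X), mu (fmap (@eta X) t) = t;
  mu_assoc : forall (X : Type) (t : T (T (T X))), mu (mu t) = mu (fmap (@mu X) t)
}.

Arguments fmap {m X Y}.
Arguments eta {m X}.
Arguments mu {m X}.

(* Finitary monad on Set: every element of T X lies in the image of T Y -> T X
   for (the inclusion of) a finite set Y; equivalently T preserves filtered colimits. *)
Definition finitary (M : monad) : Prop :=
  forall (X : Type) (t : M X), exists (n : nat) (f : 'I_n -> X) (s : M 'I_n),
    fmap f s = t.

Definition is_algebra (M : monad) (B : Type) (a : M B -> B) : Prop :=
  (forall b : B, a (eta b) = b) /\
  (forall t : M (M B), a (mu t) = a (fmap a t)).

Definition prod_alg (M : monad) (A B X : Type) (a : M B -> B)
  (t : M (B * (A -> M X))%type) : (B * (A -> M X))%type :=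
  (a (fmap fst t), fun c => mu (fmap (fun p => p.2 c) t)).

(* m^# : T X -> B x (T X)^A, the unique T-algebra morphism extending
   x |-> (o x, fun c => tr c x); unfolded as (structure map) o T(<o,tr>). *)
Definition msharp (M : monad) (A B X : Type) (a : M B -> B)
  (o : X -> B) (tr : A -> X -> M X) (t : M X) : (B * (A -> M X))%type :=
  prod_alg a (fmap (fun x => (o x, fun c => tr c x)) t).

Fixpoint coalg_deriv (Y A : Type) (d : A -> Y -> Y) (w : seq A) (y : Y) : Y :=
  match w with
  | [::] => y
  | c :: w' => coalg_deriv d w' (d c y)
  end.

Definition coalg_sem (Y A B : Type) (o : Y -> B) (d : A -> Y -> Y) (y : Y)
  : seq A -> B := fun w => o (coalg_deriv d w y).

Definition trace (M : monad) (A B X : Type) (a : M B -> B)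
  (o : X -> B) (tr : A -> X -> M X) (x : X) : seq A -> B :=
  coalg_sem (fun t => (msharp a o tr t).1)
            (fun c t => (msharp a o tr t).2 c) (eta x).

Definition series_deriv (A B : Type) (w : seq A) (s : seq A -> B) : seq A -> B :=
  fun v => s (w ++ v).

Definition rational (A B : Type) (s : seq A -> B) : Prop :=
  exists (n : nat) (g : 'I_n -> (seq A -> B)),
    forall w : seq A, exists i : 'I_n, g i = series_deriv w s.

From mathcomp Require Import all_boot.
From Stdlib Require Import FunctionalExtensionality.

(* Write [[-]] for the final-coalgebra semantics of the L-coalgebra
   m^# : TX -> B x (TX)^A.  By induction on words, using the algebra laws of a
   and the monad laws, [[-]] is the algebra extension of the trace
   semantics:  [[t]](w) = a (T (fun y => [[y]]_m (w)) t)  for all t : TX.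
   Since d_w [[eta x]] = [[d_w (eta x)]], every derivative of [[x]]_m has
   the form  v |-> phi (fun y => [[y]]_m (v))  with phi : B^X -> B the map
   f |-> a (T f t_w).  When X and B are finite, such phi range over the
   finite type {ffun B^X -> B}, so [[x]]_m has finitely many derivatives. *)

Lemma rational_of_finite_cover (A B : Type) (F : finType)
    (interp : F -> seq A -> B) (s : seq A -> B) :
  (forall w, exists f, interp f = series_deriv w s) -> rational s.
Proof.
move=> cover; exists #|F|, (fun i => interp (enum_val i)) => w.
have [f <-] := cover w.
by exists (enum_rank f); rewrite enum_rankK.
Qed.

Lemma coalg_deriv_cat (Y A : Type) (d : A -> Y -> Y) (w v : seq A) (y : Y) :
  coalg_deriv d (w ++ v) y = coalg_deriv d v (coalg_deriv d w y).
Proof. by elim: w y => [|c w IH] y //=. Qed.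

Lemma series_deriv_coalg_sem (Y A B : Type) (o : Y -> B) (d : A -> Y -> Y)
    (w : seq A) (y : Y) :
  series_deriv w (coalg_sem o d y) = coalg_sem o d (coalg_deriv d w y).
Proof.
by apply: functional_extensionality => v; rewrite /series_deriv /coalg_sem coalg_deriv_cat.
Qed.

Section DeterminisedAutomaton.

Context {M : monad} {A B X : Type} (a : M B -> B) (o : X -> B)
  (tr : A -> X -> M X).
Hypothesis a_alg : is_algebra a.

Definition det_out (t : M X) : B := (msharp a o tr t).1.
Definition det_deriv (c : A) (t : M X) : M X := (msharp a o tr t).2 c.

Lemma det_outE (t : M X) : det_out t = a (fmap o t).
Proof. by rewrite /det_out /msharp /prod_alg /= -fmap_comp. Qed.

Lemma det_derivE (c : A) (t : M X) : det_deriv c t = mu (fmap (tr c) t).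
Proof. by rewrite /det_deriv /msharp /prod_alg /= -fmap_comp. Qed.

Let sem := coalg_sem det_out det_deriv.
Let trace_m := trace a o tr.

Lemma sem_algebra_extension (w : seq A) (t : M X) :
  sem t w = a (fmap (fun y => trace_m y w) t).
Proof.
have [a_eta a_mu] := a_alg.
elim: w t => [|c w IH] t.
  rewrite /sem /coalg_sem /= det_outE; congr (a (fmap _ t)).
  apply: functional_extensionality => y.
  by rewrite /trace_m /trace /coalg_sem /= -fmap_comp eta_nat a_eta.
have sem_cons (s : M X) : sem s (c :: w) = sem (det_deriv c s) w by [].
rewrite sem_cons IH det_derivE mu_nat a_mu -!fmap_comp.
congr (a (fmap _ t)); apply: functional_extensionality => y.
have -> : trace_m y (c :: w) = sem (eta y) (c :: w) by [].
by rewrite sem_cons IH det_derivE eta_nat mu_eta.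
Qed.

Lemma trace_deriv_factors (x : X) (w : seq A) :
  series_deriv w (trace_m x) =
  (fun v => a (fmap (fun y => trace_m y v) (coalg_deriv det_deriv w (eta x)))).
Proof.
rewrite /trace_m /trace series_deriv_coalg_sem.
by apply: functional_extensionality => v; rewrite -/sem sem_algebra_extension.
Qed.

End DeterminisedAutomaton.

Theorem mainTheorem3 (M : monad) (HM : finitary M) (A B X : finType)
  (a : M B -> B) (Ha : is_algebra a)
  (o : X -> B) (tr : A -> X -> M X) (x : X) :
  rational (trace a o tr x).
Proof.
(* Code a derivative by its map B^X -> B, a finite datum. *)
pose interp (phi : {ffun {ffun X -> B} -> B}) (v : seq A) : B :=
  phi [ffun y => trace a o tr y v].
apply: (@rational_of_finite_cover A B _ interp) => w.
pose t := coalg_deriv (det_deriv a o tr) w (eta x).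
exists [ffun f : {ffun X -> B} => a (fmap f t)].
rewrite (trace_deriv_factors a o tr Ha); apply: functional_extensionality => v.
rewrite /interp ffunE; congr (a (fmap _ t)).
by apply: functional_extensionality => y; rewrite ffunE.
Qed.
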